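(* Under the standing assumptions (A1)–(A5), the function $Iu$ is continuous on $\mathbb{R}^n$, where $u$ is the value function and $I\varphi(x)=\int_{\mathbb{R}^l}[\varphi(x+j(x,z))-\varphi(x)]\,\nu(dz)$.
   Context: Let $(\Omega,\mathcal F,(\mathcal F_t)_{t\ge0},\mathbb P)$ be a complete filtered probability space satisfying the usual conditions, carrying an $m$-dimensional Brownian motion $W$ and an independent Poisson random measure $N$ on $[0,\infty)\times\mathbb{R}^l$ with Lévy measure $\nu(\cdot)=\mathbb E N(1,\cdot)$ (possibly infinite), and compensated measure $\widetilde N(dt,dz)=N(dt,dz)-\nu(dz)dt$; the filtration is generated by $W$ and $N$. Given $\mu:\mathbb{R}^n\to\mathbb{R}^n$, $\sigma:\mathbb{R}^n\to\mathbb{R}^{n\times m}$, $j:\mathbb{R}^n\times\mathbb{R}^l\to\mathbb{R}^n$, $f:\mathbb{R}^n\to[0,\infty)$, $B:\mathbb{R}^n\to\mathbb{R}$ and $r>0$, the standing assumptions are: (A1) there are constants $C_\mu,C_\sigma>0$ and a positive function $C_j\in L^1\cap L^2(\mathbb{R}^l,\nu)$ with $|\mu(x)-\mu(y)|\le C_\mu|x-y|$, $\|\sigma(x)-\sigma(y)\|\le C_\sigma|x-y|$, $|j(x,z)-j(y,z)|\le C_j(z)|x-y|$ for all $x,y\in\mathbb{R}^n$, $z\in\mathbb{R}^l$; and $j(x,\cdot)\in L^1(\mathbb{R}^l;\nu)$ for every $x$. (A2) with $A(x)=(a_{ij}(x))=\frac12\sigma(x)\sigma(x)^{T}$, there is $\lambda>0$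 with $a_{ij}(x)\xi_i\xi_j\ge\lambda|\xi|^2$ for all $x,\xi$. (A3) $f\ge0$ and $|f(x)-f(y)|\le C_f|x-y|$ for some constant $C_f>0$. (A4) $\inf_{\xi}B(\xi)=K>0$, $B\in C(\mathbb{R}^n\setminus\{0\})$, $|B(\xi)|\to\infty$ as $|\xi|\to\infty$, and $B(\xi_1)+B(\xi_2)\ge B(\xi_1+\xi_2)+K$ for all $\xi_1,\xi_2$. (A5) $r>2C_\mu+C_\sigma^2+\int_{\mathbb{R}^l}C_j^2(z)\nu(dz)$. An admissible impulse control $V=(\tau_1,\xi_1;\tau_2,\xi_2;\dots)$ consists of stopping times $0<\tau_1<\tau_2<\cdots$ with $\tau_i\to\infty$ a.s. and $\mathcal F_{\tau_i}$-measurable $\mathbb{R}^n$-valued $\xi_i$. The controlled state satisfies $X(0)=x$, $dX(t)=\mu(X(t^-))dt+\sigma(X(t^-))dW(t)+\int j(X(t^-),z)\widetilde N(dt,dz)+\sum_i\delta(t-\tau_i)\xi_i$. The cost is $J_x[V]=\mathbb E_x\big(\int_0^\infty e^{-rt}f(X(t))dt+\sum_{i}e^{-r\tau_i}B(\xi_i)\big)$ and the value function is $u(x)=\inf_V J_x[V]$. The operator $I$ is defined on Lipschitz functions $\varphi$ by the formula in the claim ($u$ is Lipschitz). *)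

From HB Require Import structures.
From mathcomp Require Import all_boot all_order all_algebra.
From mathcomp Require Import all_classical all_reals all_analysis.
Set Implicit Arguments. Unset Strict Implicit. Unset Printing Implicit Defensive.
Import Order.TTheory GRing.Theory Num.Theory.
Import numFieldNormedType.Exports.
Local Open Scope classical_set_scope.
Local Open Scope ring_scope.

Definition enorm (R : realType) (n : nat) (x : 'rV[R]_n) : R :=
  Num.sqrt (\sum_(i < n) x ord0 i ^+ 2).

Definition frob (R : realType) (n m : nat) (s : 'M[R]_(n, m)) : R :=
  Num.sqrt (\sum_(i < n) \sum_(k < m) s i k ^+ 2).

Definition mark (R : realType) (l : nat) :=
  g_sigma_algebraType (@open 'rV[R]_l).

Definition levy_measure (R : realType) (l : nat)
    (nu : {measure set (mark R l) -> \bar R}) : Prop :=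
  nu [set (0 : 'rV[R]_l)] = 0%E /\
  (\int[nu]_(z in [set: mark R l])
      (Num.min 1 (enorm (z : 'rV[R]_l) ^+ 2))%:E < +oo)%E.

Definition Iop (R : realType) (n l : nat)
    (nu : {measure set (mark R l) -> \bar R})
    (j : 'rV[R]_n -> mark R l -> 'rV[R]_n) (phi : 'rV[R]_n -> R)
    (x : 'rV[R]_n) : R :=
  Rintegral nu [set: mark R l] (fun z => phi (x + j x z) - phi x).

From HB Require Import structures.
From mathcomp Require Import all_boot all_order all_algebra.
From mathcomp Require Import all_classical all_reals all_analysis.
From mathcomp Require Import lra ring measurable_realfun.
(* The jump z |-> u(x + j(x,z)) - u(x) is bounded by Lip(u) |j(x,z)|, and
   moving x by delta <= 1 changes it by at most Lip(u) (2 + C_j(z)) delta.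
   Hence |Iu(y) - Iu(x)| <= int min(G, H delta) dnu for a nu-integrable G and a
   measurable H that do not depend on y, and this integral tends to 0 with
   delta by dominated convergence.  All norms on R^n being equivalent, the
   Euclidean hypotheses transfer to the sup norm that defines the topology of
   'rV[R]_n.  Measurability of z |-> u(x + j(x,z)) holds because a continuous
   function of coordinatewise measurable maps is measurable: every open subset
   of R^n is a countable union of the grid cubes it contains. *)

Set Implicit Arguments.
Unset Strict Implicit.
Unset Printing Implicit Defensive.

Import Order.TTheory GRing.Theory Num.Theory.
Import numFieldNormedType.Exports.
Local Open Scope classical_set_scope.
Local Open Scope ring_scope.

Section rV_norms.
Variables (R : realType) (n : nat).
Implicit Types v : 'rV[R]_n.

Lemma enorm_ge0 v : 0 <= enorm v.
Proof. exact: sqrtr_ge0. Qed.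

Lemma abs_coord_le_enorm v i : `|v ord0 i| <= enorm v.
Proof.
rewrite /enorm -sqrtr_sqr; apply: ler_wsqrtr.
by rewrite (bigD1 i) //= lerDl; apply: sumr_ge0 => k _; exact: sqr_ge0.
Qed.

Lemma enorm_le_sum_abs v : enorm v <= \sum_(i < n) `|v ord0 i|.
Proof.
have sum_ge0 : 0 <= \sum_(i < n) `|v ord0 i| by apply: sumr_ge0.
rewrite /enorm -[X in _ <= X]ger0_norm // -sqrtr_sqr; apply: ler_wsqrtr.
rewrite expr2 mulr_suml; apply: ler_sum => i _.
rewrite -real_normK ?num_real // expr2; apply: ler_wpM2l => //.
by rewrite (bigD1 i) //= lerDl; apply: sumr_ge0.
Qed.

Lemma abs_coord_le_norm v i : `|v ord0 i| <= `|v|.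
Proof.
rewrite -[`|v|]/(mx_norm v) mx_normrE.
exact: (le_bigmax _ (fun ij : 'I_1 * 'I_n => `|v ij.1 ij.2|) (ord0, i)).
Qed.

Lemma norm_rV_lt v e : 0 < e -> (forall i, `|v ord0 i| < e) -> `|v| < e.
Proof.
move=> e0 ve; rewrite -[`|v|]/(mx_norm v) mx_normrE.
by apply: bigmax_lt => // -[i k] _; rewrite [i]ord1; exact: ve.
Qed.

Lemma norm_le_enorm v : `|v| <= enorm v.
Proof.
rewrite -[`|v|]/(mx_norm v) mx_normrE.
apply: bigmax_le; first exact: enorm_ge0.
by move=> [i k] _; rewrite [i]ord1; exact: abs_coord_le_enorm.
Qed.

Lemma enorm_le_norm v : enorm v <= n%:R * `|v|.
Proof.
apply: le_trans (enorm_le_sum_abs v) _.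
apply: le_trans (ler_sum _ (fun i _ => abs_coord_le_norm v i)) _.
by rewrite sumr_const card_ord mulr_natl.
Qed.

Lemma le_mul_enorm_norm (C x : R) v :
  x <= C * enorm v -> x <= `|C| * n%:R * `|v|.
Proof.
move=> /le_trans; apply; rewrite -mulrA.
apply: le_trans (ler_wpM2r (enorm_ge0 v) (ler_norm C)) _.
by rewrite ler_wpM2l // enorm_le_norm.
Qed.

End rV_norms.

Lemma lipschitz_continuous (R : realType) (V W : normedModType R) (c : R)
    (f : V -> W) :
  (forall a b, `|f a - f b| <= c * `|a - b|) -> continuous f.
Proof.
move=> f_lip x; apply/cvgrPdist_lt => e e0; apply/nbhs_normP.
exists (e / (`|c| + 1)); first by rewrite /= divr_gt0 // ltr_wpDl.
move=> y /= xy; apply: le_lt_trans (f_lip x y) _.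
apply: (@le_lt_trans _ _ (`|c| * `|x - y|)); first by rewrite ler_wpM2r // ler_norm.
apply: le_lt_trans (ler_wpM2l (normr_ge0 c) (ltW xy)) _.
by rewrite mulrA ltr_pdivrMr ?ltr_wpDl // mulrDr mulr1 mulrC ltrDl.
Qed.

Section grid_boxes.
Variables (R : realType) (n : nat).

Definition grid_box (p : nat * {ffun 'I_n -> int}) : set 'rV[R]_n :=
  [set v | forall i, (p.2 i)%:~R <= p.1.+1%:R * v ord0 i < (p.2 i + 1)%:~R].

Lemma grid_box_floor (k : nat) (v : 'rV[R]_n) :
  grid_box (k, [ffun i => Num.floor (k.+1%:R * v ord0 i)]) v.
Proof. by move=> i /=; rewrite ffunE floor_le floorD1_gt. Qed.

Lemma grid_box_norm_lt p (v w : 'rV[R]_n) :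
  grid_box p v -> grid_box p w -> `|v - w| < p.1.+1%:R^-1.
Proof.
have k0 : 0 < p.1.+1%:R :> R by rewrite ltr0n.
move=> pv pw; apply: norm_rV_lt; first by rewrite invr_gt0.
move=> i; rewrite -(ltr_pM2l k0) mulfV ?gt_eqF // -[X in X * _]gtr0_norm //.
rewrite -normrM !mxE mulrBr ltr_norml.
move: (pv i) (pw i) => /andP[v1 v2] /andP[w1 w2]; move: v1 v2 w1 w2.
rewrite intrD.
set a := (p.2 i)%:~R; set x := _ * v _ _; set y := _ * w _ _.
by clearbody a x y => *; apply/andP; split; lra.
Qed.

Lemma open_grid_box_cover (U : set 'rV[R]_n) :
  open U -> U = \bigcup_(p in [set p | grid_box p `<=` U]) grid_box p.
Proof.
move=> oU; apply/seteqP; split=> [v Uv|v [p /= pU]]; last exact: pU.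
have /nbhs_normP [e /= e0 vU] : nbhs v U by apply: open_nbhs_nbhs.
pose k := Num.truncn e^-1.
have ke : k.+1%:R^-1 < e.
  by rewrite -[e]invrK ltf_pV2 ?posrE ?invr_gt0 ?ltr0n // truncnS_gt.
exists (k, [ffun i => Num.floor (k.+1%:R * v ord0 i)]); last exact: grid_box_floor.
move=> w wv; apply: vU => /=.
exact: lt_trans (grid_box_norm_lt (grid_box_floor k v) wv) ke.
Qed.

End grid_boxes.

Section rV_measurability.
Context d (T : measurableType d) (R : realType) (n : nat).
Variable h : T -> 'rV[R]_n.
Hypothesis mh : forall i, measurable_fun setT (fun t => h t ord0 i).

Lemma measurable_preimage_grid_box p : measurable (h @^-1` grid_box p).
Proof.
have -> : h @^-1` grid_box p = \bigcap_(i in setT)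
    ((fun t => p.1.+1%:R * h t ord0 i) @^-1` `[(p.2 i)%:~R, (p.2 i + 1)%:~R[).
  by apply/seteqP; split=> t /= pt i => [_|]; [|have := pt i I];
    rewrite /= in_itv //=; exact: pt.
apply: fin_bigcap_measurable; first exact: finite_finset.
move=> i _; rewrite -[X in measurable X]setTI.
exact: (measurable_funM (measurable_cst _) (mh i)).
Qed.

Lemma measurable_preimage_open (U : set 'rV[R]_n) :
  open U -> measurable (h @^-1` U).
Proof.
move=> /open_grid_box_cover ->; rewrite preimage_bigcup bigcup_mkcond.
apply: countable_bigcupT_measurable; first exact: countableP.
move=> p; case: ifP => _; first exact: measurable_preimage_grid_box.
exact: measurable0.
Qed.

Lemma measurable_comp_continuous (F : 'rV[R]_n -> R) :
  continuous F -> measurable_fun setT (F \o h).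
Proof.
move=> cF; apply: (measurability _ (RGenOpens.measurableE R)).
move=> _ [_ [a [b ->]] <-]; rewrite setTI comp_preimage.
apply: measurable_preimage_open; exact: ((continuousP F).1 cF _ (itv_open a b)).
Qed.

End rV_measurability.

Section integral_min_scale.
Context d (T : measurableType d) (R : realType).
Variables (nu : {measure set T -> \bar R}) (G H : T -> R).
Hypotheses (G0 : forall z, 0 <= G z) (H0 : forall z, 0 <= H z).
Hypotheses (iG : nu.-integrable setT (EFin \o G)) (mH : measurable_fun setT H).

Lemma integrable_min_scale (k : nat) :
  nu.-integrable setT (EFin \o (fun z => Num.min (G z) (H z / k.+1%:R))).
Proof.
have mG : measurable_fun setT G by apply/measurable_EFinP; exact: measurable_int _ iG.
apply: (le_integrable measurableT _ _ iG).
  apply/measurable_EFinP; apply: measurable_minr => //.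
  exact: measurable_funM mH (measurable_cst _).
move=> z _; rewrite /= lee_fin !ger0_norm ?ge_min ?lexx //.
by rewrite le_min G0 divr_ge0.
Qed.

Lemma Rintegral_min_scale_cvg0 :
  Rintegral nu setT (fun z => Num.min (G z) (H z / k.+1%:R)) @[k --> \oo] --> 0.
Proof.
have min_ge0 k z : 0 <= Num.min (G z) (H z / k.+1%:R) by rewrite le_min G0 divr_ge0.
have := @dominated_cvg _ _ _ nu setT measurableT
  (fun k => EFin \o fun z => Num.min (G z) (H z / k.+1%:R)) (cst 0%E) (EFin \o G)
  (fun k => measurable_int _ (integrable_min_scale k)) _ (fun z _ => erefl) iG.
rewrite integral0 => /(_ _ _)/fine_cvg; apply.
- move=> z _ /=; apply: cvg_EFin; first exact: nearW.
  apply: (@squeeze_cvgr _ _ _ _ (fun=> 0) (fun k => H z * k.+1%:R^-1)).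
  + by apply: nearW => k; rewrite min_ge0 ge_min lexx orbT.
  + exact: cvg_cst.
  + by rewrite -(mulr0 (H z)); apply: cvgM; [exact: cvg_cst|exact: cvg_harmonic].
- by move=> k z _ /=; rewrite lee_fin ger0_norm // ge_min lexx.
Qed.

End integral_min_scale.

Section nonlocal_operator.
Context d (T : measurableType d) (R : realType) (V : normedModType R).
Variables (nu : {measure set T -> \bar R}) (phi : V -> R) (J : V -> T -> V).
Variables (c : R) (L : T -> R).
Hypothesis c0 : 0 <= c.
Hypothesis phi_lip : forall a b, `|phi a - phi b| <= c * `|a - b|.
Hypothesis L0 : forall z, 0 <= L z.
Hypothesis J_lip : forall x y z, `|J x z - J y z| <= L z * `|x - y|.
Hypothesis iL : nu.-integrable setT (EFin \o L).
Hypothesis iJ : forall x, nu.-integrable setT (EFin \o (fun z => `|J x z|)).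
Hypothesis mphiJ : forall x, measurable_fun setT (fun z => phi (x + J x z)).

Let jump x z := phi (x + J x z) - phi x.

Lemma abs_jump_le x z : `|jump x z| <= c * `|J x z|.
Proof. by apply: le_trans (phi_lip _ _) _; rewrite addrAC subrr add0r. Qed.

Lemma jump_integrable x : nu.-integrable setT (EFin \o jump x).
Proof.
apply: (le_integrable measurableT _ _ (integrableZl measurableT c (iJ x))).
  by apply/measurable_EFinP; exact: measurable_funB (mphiJ x) (measurable_cst _).
move=> z _; rewrite /= lee_fin (ger0_norm (mulr_ge0 c0 (normr_ge0 _))).
exact: abs_jump_le.
Qed.

Lemma abs_jumpB_le x y z (delta : R) : `|y - x| <= delta -> delta <= 1 ->
  `|jump y z - jump x z|
    <= Num.min (c * (2 * `|J x z| + L z)) (c * (2 + L z) * delta).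
Proof.
move=> yx delta1; have delta0 : 0 <= delta := le_trans (normr_ge0 _) yx.
have dJ : `|J y z - J x z| <= L z * delta.
  by apply: le_trans (J_lip y x z) _; rewrite ler_wpM2l.
have Jy : `|J y z| <= `|J x z| + L z * delta.
  rewrite -[J y z](subrK (J x z)) addrC; apply: le_trans (ler_normD _ _) _.
  by rewrite lerD2l.
have LdL : L z * delta <= L z by exact: ler_piMr.
rewrite le_min; apply/andP; split.
  apply: le_trans (ler_normB _ _) _.
  apply: le_trans (lerD (abs_jump_le y z) (abs_jump_le x z)) _.
  by rewrite -mulrDr ler_wpM2l //; lra.
have -> : jump y z - jump x z = (phi (y + J y z) - phi (x + J x z)) - (phi y - phi x).
  by rewrite /jump; ring.
have dxJ : `|y + J y z - (x + J x z)| <= delta + L z * delta.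
  by rewrite opprD addrACA; apply: le_trans (ler_normD _ _) _; exact: lerD.
apply: le_trans (ler_normB _ _) _.
apply: le_trans (lerD (phi_lip _ _) (phi_lip y x)) _.
apply: le_trans (lerD (ler_wpM2l c0 dxJ) (ler_wpM2l c0 yx)) _.
by have -> : c * (delta + L z * delta) + c * delta = c * (2 + L z) * delta by ring.
Qed.

Theorem continuous_nonlocal_op :
  continuous (fun x => Rintegral nu setT (fun z => phi (x + J x z) - phi x)).
Proof.
move=> x; apply/cvgrPdist_lt => e e0.
pose G z := c * (2 * `|J x z| + L z); pose H z := c * (2 + L z).
have G0 z : 0 <= G z by rewrite mulr_ge0 ?addr_ge0 ?mulr_ge0.
have H0 z : 0 <= H z by rewrite mulr_ge0 ?addr_ge0.
have iG : nu.-integrable setT (EFin \o G).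
  apply: (eq_integrable measurableT _ _ _ (integrableZl measurableT c
    (integrableD measurableT (integrableZl measurableT 2 (iJ x)) iL))).
  by move=> z _; rewrite /G /= EFinM [in RHS]EFinD [in RHS]EFinM.
have mH : measurable_fun setT H.
  apply: measurable_funM (measurable_cst _) (measurable_funD (measurable_cst _) _).
  by apply/measurable_EFinP; exact: measurable_int _ iL.
have [k _ small_k] := cvgr_lt 0 (Rintegral_min_scale_cvg0 G0 H0 iG mH) e e0.
apply/nbhs_normP; exists k.+1%:R^-1; first by rewrite /= invr_gt0 ltr0n.
move=> y /= xy; have [iy ix] := (jump_integrable y, jump_integrable x).
have iD : nu.-integrable setT (EFin \o (fun z => jump y z - jump x z)).
  apply: eq_integrable measurableT _ _ _ (integrableB measurableT iy ix).
  by move=> z _; rewrite /= EFinB.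
rewrite distrC -RintegralB //.
apply: le_lt_trans (le_normr_Rintegral measurableT iD) _.
apply: le_lt_trans _ (small_k k (leqnn k)).
apply: le_Rintegral measurableT (integrable_norm iD)
  (integrable_min_scale G0 H0 iG mH k) _ => z _.
apply: abs_jumpB_le; first by rewrite distrC ltW.
by rewrite invr_le1 ?ler1n ?unitfE ?pnatr_eq0.
Qed.

End nonlocal_operator.

Theorem lemma3p2 (R : realType) (n m l : nat)
  (mu : 'rV[R]_n -> 'rV[R]_n) (sigma : 'rV[R]_n -> 'M[R]_(n, m))
  (j : 'rV[R]_n -> mark R l -> 'rV[R]_n) (f : 'rV[R]_n -> R)
  (B : 'rV[R]_n -> R) (r : R)
  (nu : {measure set (mark R l) -> \bar R})
  (u : 'rV[R]_n -> R) :
  levy_measure nu ->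
  (* (A1) *)
  forall (Cmu Csig : R) (Cj : mark R l -> R),
  0 < Cmu -> 0 < Csig -> (forall z, 0 < Cj z) ->
  nu.-integrable [set: mark R l] (fun z => (Cj z)%:E) ->
  nu.-integrable [set: mark R l] (fun z => (Cj z ^+ 2)%:E) ->
  (forall x y, enorm (mu x - mu y) <= Cmu * enorm (x - y)) ->
  (forall x y, frob (sigma x - sigma y) <= Csig * enorm (x - y)) ->
  (forall x y z, enorm (j x z - j y z) <= Cj z * enorm (x - y)) ->
  (forall x (i : 'I_n), nu.-integrable [set: mark R l] (fun z => (j x z ord0 i)%:E)) ->
  (* (A2) *)
  forall lambda : R, 0 < lambda ->
  (forall x xi : 'rV[R]_n,
     \sum_(i < n) \sum_(k < n)
        ((2%:R)^-1 * (sigma x *m (sigma x)^T) i k) * xi ord0 i * xi ord0 k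
     >= lambda * enorm xi ^+ 2) ->
  (* (A3) *)
  forall Cf : R, 0 < Cf ->
  (forall x, 0 <= f x) ->
  (forall x y, `|f x - f y| <= Cf * enorm (x - y)) ->
  (* (A4) *)
  forall K : R, 0 < K ->
  (forall xi, K <= B xi) ->
  (forall e : R, 0 < e -> exists xi, B xi < K + e) ->
  {within ~` [set (0 : 'rV[R]_n)], continuous B} ->
  (forall M : R, exists R0 : R, forall xi, R0 < enorm xi -> M < `|B xi|) ->
  (forall xi1 xi2, B xi1 + B xi2 >= B (xi1 + xi2) + K) ->
  (* (A5) *)
  2%:R * Cmu + Csig ^+ 2 + Rintegral nu [set: mark R l] (fun z => Cj z ^+ 2) < r ->
  (* the value function u is Lipschitz *)
  forall Cu : R, (forall x y, `|u x - u y| <= Cu * enorm (x - y)) ->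
  continuous (Iop nu j u).
Proof.
move=> _ Cmu Csig Cj _ _ _ iCj _ _ _ j_lip j_int lambda _ _ Cf _ _ _ K _ _ _ _ _ _ _.
move=> Cu u_lip.
have u_lip_sup a b : `|u a - u b| <= `|Cu| * n%:R * `|a - b|.
  exact/le_mul_enorm_norm/u_lip.
have j_meas x i : measurable_fun setT (fun z => j x z ord0 i).
  by apply/measurable_EFinP; exact: measurable_int _ (j_int x i).
apply: (@continuous_nonlocal_op _ _ _ _ nu u j (`|Cu| * n%:R)
  (fun z => `|Cj z| * n%:R)) => //.
- by move=> x y z; apply/le_mul_enorm_norm/(le_trans (norm_le_enorm _)).
- apply: eq_integrable measurableT _ _ _
    (integrableZr measurableT n%:R (integrable_norm iCj)).
  by move=> z _; rewrite /= EFinM.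
- move=> x.
  have sum_int : nu.-integrable setT (fun z => (\sum_(i < n) `|j x z ord0 i|%:E)%E).
    by apply: (integrable_sum measurableT) => i _; exact: integrable_norm (j_int x i).
  apply: (le_integrable measurableT _ _ sum_int).
    apply/measurable_EFinP; exact: measurable_comp_continuous (@norm_continuous _ _).
  move=> z _; rewrite /= sumEFin lee_fin !ger0_norm ?sumr_ge0 //.
  exact: le_trans (norm_le_enorm _) (enorm_le_sum_abs _).
- move=> x; apply: (measurable_comp_continuous _ (lipschitz_continuous u_lip_sup)).
  move=> i; rewrite (_ : (fun t => _) = fun t => x ord0 i + j x t ord0 i).
    exact: measurable_funD (measurable_cst _) (j_meas x i).
  by apply: funext => t; rewrite mxE.
Qed.
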